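(* For any $y,\bar y\in\mathbb R$, $$\|\nabla w_h(y)\|\le C_P\|f\|,\qquad \|w_h(y)\|\le e^{-y}\|f\|,$$ $$\|\nabla(w_h(y)-w_h(\bar y))\|\le C_P^3|e^y-e^{\bar y}|\,\|f\|,$$ $$\|w_h(y)-w_h(\bar y)\|\le e^{-y}|e^{y-\bar y}-1|\,\|f\|,$$ $$\|\nabla(w_h(y)-w_h(\bar y))\|\le\tfrac12e^{-y/2}|e^{y-\bar y}-1|\,\|f\|.$$
   Context: $\Omega\subset\mathbb R^d$, $d\in\{1,2,3\}$, is a bounded polyhedral domain and $\|\cdot\|$ is the $L^2(\Omega)$ norm. $C_P$ is the Poincaré constant: $\|v\|\le C_P\|\nabla v\|$ for all $v\in H_0^1(\Omega)$. $\mathbb V_h\subset H_0^1(\Omega)$ is the space of continuous piecewise linear finite element functions on a conforming shape-regular simplicial partition of $\Omega$. Let $f\in L^2(\Omega)$. For $y\in\mathbb R$, $w_h(y)\in\mathbb V_h$ is the unique solution of $\int_\Omega\nabla w_h(y)\cdot\nabla v_h+e^y\int_\Omega w_h(y)v_h=\int_\Omega fv_h$ for all $v_h\in\mathbb V_h$. *)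

From HB Require Import structures.
From mathcomp Require Import all_boot all_order all_algebra.
From mathcomp Require Import all_classical all_reals.
From mathcomp Require Import topology normedtype sequences exp.
Set Implicit Arguments. Unset Strict Implicit. Unset Printing Implicit Defensive.
Import Order.TTheory GRing.Theory Num.Theory.
Local Open Scope ring_scope.

(* U      : ambient real vector space (plays L^2(Omega));
   ip     : the L^2 inner product (symmetric, bilinear, positive semidefinite);
   Vh     : the finite element subspace V_h;
   a      : the Dirichlet form a(u,v) = \int grad u . grad v on V_h
            (symmetric, bilinear, nonnegative on V_h). *)

Definition sym_bilinear (R : realType) (U : lmodType R) (b : U -> U -> R) :=
  (forall u v, b u v = b v u) /\
  (forall (c : R) (u v w : U), b (c *: u + v) w = c * b u w + b v w).

Definition fe_subspace (R : realType) (U : lmodType R) (Vh : U -> Prop) :=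
  Vh 0 /\ (forall (c : R) (u v : U), Vh u -> Vh v -> Vh (c *: u + v)).

Definition fnorm (R : realType) (U : lmodType R) (b : U -> U -> R) (v : U) : R :=
  Num.sqrt (b v v).

(* Testing the Galerkin equation [a(u,v) + k (u,v) = (g,v)] with [v = u] and
   using Cauchy-Schwarz gives the energy inequality
   [|u|_a^2 + k |u|^2 <= |g| |u|], which yields three stability bounds: through
   the Poincare inequality, through [k > 0], and by completing the square.
   The difference [w(y) - w(ybar)] solves the same problem with [k = e^y] and
   right-hand side [(e^ybar - e^y) w(ybar)], so these bounds combined with the
   estimates for [w(ybar)] give the three difference estimates. *)
From HB Require Import structures.
From mathcomp Require Import all_boot all_order all_algebra.
From mathcomp Require Import all_classical all_reals.
From mathcomp Require Import topology normedtype sequences exp.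
From mathcomp Require Import ring lra.
Set Implicit Arguments. Unset Strict Implicit. Unset Printing Implicit Defensive.
Import Order.TTheory GRing.Theory Num.Theory.
Local Open Scope ring_scope.

Lemma fnorm_ge0 (R : realType) (U : lmodType R) (b : U -> U -> R) u :
  0 <= fnorm b u.
Proof. exact: sqrtr_ge0. Qed.

Section SymBilinear.
Variables (R : realType) (U : lmodType R) (b : U -> U -> R).
Hypothesis b_sym_bilinear : sym_bilinear b.

Lemma bilin_sym u v : b u v = b v u.
Proof. by case: b_sym_bilinear. Qed.

Lemma bilin0l v : b 0 v = 0.
Proof.
case: b_sym_bilinear => _ lin; have := lin 1 0 0 v.
by rewrite scale1r addr0 mul1r => /esym/eqP; rewrite -subr_eq0 addrK => /eqP.
Qed.

Lemma bilinZl c u v : b (c *: u) v = c * b u v.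
Proof.
by case: b_sym_bilinear => _ lin; have := lin c u 0 v; rewrite !addr0 bilin0l addr0.
Qed.

Lemma bilinDl u u' v : b (u + u') v = b u v + b u' v.
Proof. by case: b_sym_bilinear => _ lin; have := lin 1 u u' v; rewrite scale1r mul1r. Qed.

Lemma bilinBl u u' v : b (u - u') v = b u v - b u' v.
Proof. by rewrite bilinDl -scaleN1r bilinZl mulN1r. Qed.

Lemma bilinDr u v v' : b u (v + v') = b u v + b u v'.
Proof. by rewrite bilin_sym bilinDl !(bilin_sym _ u). Qed.

Lemma bilinZr c u v : b u (c *: v) = c * b u v.
Proof. by rewrite bilin_sym bilinZl bilin_sym. Qed.

Lemma bilin_comb s t u v : b (s *: u + t *: v) (s *: u + t *: v) =
  s ^+ 2 * b u u + 2 * s * t * b u v + t ^+ 2 * b v v.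
Proof. rewrite bilinDl !bilinZl !bilinDr !bilinZr (bilin_sym v u); ring. Qed.

Lemma fnormZ c u : 0 <= b u u -> fnorm b (c *: u) = `|c| * fnorm b u.
Proof.
move=> b_uu; rewrite /fnorm bilinZl bilinZr mulrA -expr2.
by rewrite sqrtrM ?sqr_ge0 // sqrtr_sqr.
Qed.

Hypothesis b_psd : forall v, 0 <= b v v.

Lemma bilin_sqr_le u v : b u v ^+ 2 <= b u u * b v v.
Proof.
have := b_psd (b v v *: u + (- b u v) *: v).
have := b_psd (b u v *: u + (- (b u u + 1)) *: v).
rewrite !bilin_comb; have := b_psd u; have := b_psd v.
set A := b u u; set B := b u v; set C := b v v => C_ge0 A_ge0.
(* the second vector only matters when [C = 0], where it forces [B = 0] *)
have [-> | C_gt0] := eqVneq C 0; first by nra.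
have {}C_gt0 : 0 < C by rewrite lt_def C_gt0.
nra.
Qed.

Lemma bilin_CauchySchwarz u v : `|b u v| <= fnorm b u * fnorm b v.
Proof.
by rewrite /fnorm -sqrtrM // -sqrtr_sqr ler_sqrt ?mulr_ge0 // bilin_sqr_le.
Qed.

End SymBilinear.

Section Galerkin.
Variables (R : realType) (U : lmodType R).
Variables (ip a : U -> U -> R) (Vh : U -> Prop).
Hypotheses (ip_sym : sym_bilinear ip) (ip_psd : forall v, 0 <= ip v v).
Hypotheses (Vh_subspace : fe_subspace Vh) (a_sym : sym_bilinear a).
Hypothesis a_psd : forall v, Vh v -> 0 <= a v v.

Definition galerkin_solution (k : R) (g u : U) :=
  Vh u /\ forall v, Vh v -> a u v + k * ip u v = ip g v.

Lemma galerkin_solutionB k k' g u u' :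
  galerkin_solution k g u -> galerkin_solution k' g u' ->
  galerkin_solution k ((k' - k) *: u') (u - u').
Proof.
case: Vh_subspace => _ Vh_comb [Vh_u sol_u] [Vh_u' sol_u'].
split; first by rewrite addrC -scaleN1r; apply: Vh_comb.
move=> v Vh_v; have := sol_u v Vh_v; have := sol_u' v Vh_v.
rewrite !(bilinBl a_sym) !(bilinBl ip_sym) (bilinZl ip_sym); lra.
Qed.

Lemma galerkin_energy k g u : galerkin_solution k g u ->
  fnorm a u ^+ 2 + k * fnorm ip u ^+ 2 <= fnorm ip g * fnorm ip u.
Proof.
move=> [Vh_u sol_u]; rewrite !sqr_sqrtr ?a_psd // sol_u //.
exact: le_trans (ler_norm _) (bilin_CauchySchwarz ip_sym ip_psd g u).
Qed.

Lemma galerkin_fnorm_le_Poincare CP k g u :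
  0 <= CP -> (forall v, Vh v -> fnorm ip v <= CP * fnorm a v) ->
  0 <= k -> galerkin_solution k g u -> fnorm a u <= CP * fnorm ip g.
Proof.
move=> CP_ge0 Poincare k_ge0 sol_u; have := galerkin_energy sol_u.
have := Poincare u (proj1 sol_u).
have := fnorm_ge0 ip g; have := fnorm_ge0 a u; have := fnorm_ge0 ip u.
set A := fnorm a u; set N := fnorm ip u; set G := fnorm ip g.
move=> N_ge0 A_ge0 G_ge0 N_le energy.
have : A ^+ 2 <= (CP * G) * A by rewrite expr2 in energy *; nra.
by move: (mulr_ge0 CP_ge0 G_ge0); rewrite expr2; nra.
Qed.

Lemma galerkin_fnorm_ip_le k g u :
  0 < k -> galerkin_solution k g u -> fnorm ip u <= k^-1 * fnorm ip g.
Proof.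
move=> k_gt0 sol_u; rewrite ler_pdivlMl //; have := galerkin_energy sol_u.
have := sqr_ge0 (fnorm a u); have := fnorm_ge0 ip g; have := fnorm_ge0 ip u.
rewrite !expr2; nra.
Qed.

(* [A^2 <= G N - k N^2 <= G^2 / (4 k)] by completing the square in [N]. *)
Lemma galerkin_fnorm_le_sqrt k g u :
  0 < k -> galerkin_solution k g u ->
  fnorm a u <= (2 * Num.sqrt k)^-1 * fnorm ip g.
Proof.
move=> k_gt0 sol_u; have := galerkin_energy sol_u.
have := fnorm_ge0 ip g; have := fnorm_ge0 a u; have := sqrtr_gt0 k.
rewrite k_gt0 -{2}(sqr_sqrtr (ltW k_gt0)); set s := Num.sqrt k.
set A := fnorm a u; set N := fnorm ip u; set G := fnorm ip g.
move=> s_gt0 A_ge0 G_ge0 energy.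
have : (2 * s * A) ^+ 2 <= G ^+ 2.
  have := sqr_ge0 (G - 2 * s ^+ 2 * N); rewrite !expr2 in energy *; nra.
move=> sqr_le; rewrite ler_pdivlMl ?mulr_gt0 //; nra.
Qed.

End Galerkin.

Lemma sqrt_expR (R : realType) (y : R) : Num.sqrt (expR y) = expR (y / 2).
Proof.
have two_neq0 : 2%:R != 0 :> R by rewrite pnatr_eq0.
rewrite -[in LHS](divfK two_neq0 y) expRM_natr sqrtr_sqr.
exact/ger0_norm/expR_ge0.
Qed.

Lemma expR_dist_scale (R : realType) (y ybar : R) :
  expR (- ybar) * `|expR y - expR ybar| = `|expR (y - ybar) - 1|.
Proof.
rewrite -(ger0_norm (expR_ge0 (- ybar))) -normrM mulrBr -expRD.
by rewrite (addrC (- ybar)) mulrC expRxMexpNx_1.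
Qed.

Theorem lemma2p1 (R : realType) (U : lmodType R)
  (ip : U -> U -> R) (Vh : U -> Prop) (a : U -> U -> R)
  (CP : R) (f : U) (w : R -> U) :
  sym_bilinear ip -> (forall v, 0 <= ip v v) ->
  fe_subspace Vh ->
  sym_bilinear a -> (forall v, Vh v -> 0 <= a v v) ->
  (* Poincare inequality (restricted to V_h), C_P >= 0 *)
  0 <= CP ->
  (forall v, Vh v -> fnorm ip v <= CP * fnorm a v) ->
  (* w_h(y) in V_h solves the discrete problem for every y *)
  (forall y, Vh (w y)) ->
  (forall y v, Vh v -> a (w y) v + expR y * ip (w y) v = ip f v) ->
  forall y ybar : R,
    [/\ fnorm a (w y) <= CP * fnorm ip f,
        fnorm ip (w y) <= expR (- y) * fnorm ip f,
        fnorm a (w y - w ybar) <= CP ^+ 3 * `|expR y - expR ybar| * fnorm ip f,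
        fnorm ip (w y - w ybar)
          <= expR (- y) * `|expR (y - ybar) - 1| * fnorm ip f
      & fnorm a (w y - w ybar)
          <= 2^-1 * expR (- y / 2) * `|expR (y - ybar) - 1| * fnorm ip f].
Proof.
move=> ip_sym ip_psd Vh_subspace a_sym a_psd CP_ge0 Poincare Vh_w w_eq y ybar.
have sol z : galerkin_solution ip a Vh (expR z) f (w z).
  by split; [exact: Vh_w | exact: w_eq].
have solD := galerkin_solutionB ip_sym Vh_subspace a_sym (sol y) (sol ybar).
have bound_a z := galerkin_fnorm_le_Poincare ip_sym ip_psd a_psd CP_ge0
  Poincare (expR_ge0 z) (sol z).
have bound_ip z : fnorm ip (w z) <= expR (- z) * fnorm ip f.
  by rewrite expRN; apply: galerkin_fnorm_ip_le (expR_gt0 z) (sol z).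
set D := `|expR y - expR ybar|; have D_ge0 : 0 <= D := normr_ge0 _.
have fnorm_rhs : fnorm ip ((expR ybar - expR y) *: w ybar) = D * fnorm ip (w ybar).
  by rewrite (fnormZ ip_sym) // distrC.
split; [exact: bound_a | exact: bound_ip | | |].
- apply: le_trans (galerkin_fnorm_le_Poincare ip_sym ip_psd a_psd CP_ge0
    Poincare (expR_ge0 y) solD) _.
  rewrite fnorm_rhs exprSr expr2 -!mulrA; apply: ler_wpM2l => //.
  rewrite !(mulrCA CP D); apply: ler_wpM2l => //.
  exact: le_trans (Poincare _ (Vh_w ybar)) (ler_wpM2l CP_ge0 (bound_a ybar)).
- apply: le_trans (galerkin_fnorm_ip_le ip_sym ip_psd a_psd (expR_gt0 y) solD) _.
  rewrite -expRN fnorm_rhs -expR_dist_scale -!mulrA.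
  apply: ler_wpM2l; first exact: expR_ge0.
  by rewrite mulrCA -/D; exact: (ler_wpM2l D_ge0 (bound_ip ybar)).
- apply: le_trans (galerkin_fnorm_le_sqrt ip_sym ip_psd a_psd (expR_gt0 y) solD) _.
  rewrite fnorm_rhs sqrt_expR invfM -expRN mulNr -expR_dist_scale -!mulrA.
  apply: ler_wpM2l; first by rewrite invr_ge0.
  apply: ler_wpM2l; first exact: expR_ge0.
  by rewrite mulrCA -/D; exact: (ler_wpM2l D_ge0 (bound_ip ybar)).
Qed.
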